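(* Fix $m\ge2$, $0<\epsilon<1/64$ and $B=\lfloor m/2\rfloor$. Suppose that for some integer $k\ge1$ there is a panel decision function $\widetilde x:\mathcal L^k\to\mathcal X_B$ such that for every participatory budgeting instance $\langle m,B,(\mathrm{Cost}_1,\dots,\mathrm{Cost}_n)\rangle$ (with $n\ge k$), $$\mathbb E_{S\sim\mathcal U_{k,n}}\big[\textsc{Social-Cost}(\widetilde x(S))\big]\le\textsc{Social-Opt}+\epsilon .$$ Then $k\ge c\, m/\epsilon^2$ for an absolute constant $c>0$ (i.e., $k=\Omega(m\cdot(1/\epsilon)^2)$).
   Context: A participatory budgeting instance $\langle m,B,(\mathrm{Cost}_1,\dots,\mathrm{Cost}_n)\rangle$: $m$ projects, budget $B>0$, and for each agent $i\in[n]$ a cost function $\mathrm{Cost}_i:[0,1]^m\to[0,1]$ that is monotone (non-increasing when the allocation increases coordinatewise) and $1$-Lipschitz w.r.t. $\|\cdot\|_1$. $\mathcal L$ denotes the set of all such $1$-Lipschitz functions $[0,1]^m\to[0,1]$, and $\mathcal X_B=\{x\in[0,1]^m:\sum_jx_j\le B\}$. For a panel $S$ of size $k$, $\widetilde x(S)$ denotes $\widetilde x$ applied to $(\mathrm{Cost}_i)_{i\in S}$. $\textsc{Social-Cost}(x)=\frac1n\sum_i\mathrm{Cost}_i(x)$ and $\textsc{Social-Opt}=\min_{x\in\mathcal X_B}\textsc{Social-Cost}(x)$. $\mathcal U_{k,n}$ is the uniform distribution over size-$k$ subsets of $[n]$. *)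

(* with MathComp-Analysis; the scalar field is Stdlib's
   concrete real numbers R (a realType via Rstruct), so that the constant c
   in the theorem is a genuine absolute constant. *)
From HB Require Import structures.
From mathcomp Require Import all_boot all_order all_algebra.
From mathcomp Require Import all_classical all_reals.
From mathcomp Require Import Rstruct.
Set Implicit Arguments. Unset Strict Implicit. Unset Printing Implicit Defensive.
Import Order.TTheory GRing.Theory Num.Theory.
Local Open Scope ring_scope.
Local Open Scope classical_set_scope.

Notation R := Rdefinitions.R.

Definition alloc (m : nat) := 'I_m -> R.
Definition cost (m : nat) := alloc m -> R.

Definition in_cube (m : nat) (x : alloc m) : Prop := forall j, 0 <= x j <= 1.

Definition dist1 (m : nat) (x y : alloc m) : R := \sum_(j < m) `|x j - y j|.

Definition in_L (m : nat) (f : cost m) : Prop :=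
  (forall x, in_cube x -> 0 <= f x <= 1) /\
  (forall x y, in_cube x -> in_cube y -> `|f x - f y| <= dist1 x y).

Definition monotone_cost (m : nat) (f : cost m) : Prop :=
  forall x y, in_cube x -> in_cube y -> (forall j, x j <= y j) -> f y <= f x.

Definition X_B (m : nat) (B : R) : set (alloc m) :=
  [set x | in_cube x /\ \sum_(j < m) x j <= B].

Definition social_cost (m n : nat) (Cost : 'I_n -> cost m) (x : alloc m) : R :=
  (\sum_(i < n) Cost i x) / n%:R.

Definition social_opt (m n : nat) (B : R) (Cost : 'I_n -> cost m) : R :=
  inf [set social_cost Cost x | x in @X_B m B].

(* a panel decision function maps the panel's cost functions (L^k) into X_B;
   it is given as a function on sequences, only its values on sequences of
   length k matter. *)
Definition panel_function_valid (m k : nat) (B : R) (xt : seq (cost m) -> alloc m) : Prop :=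
  forall fs : seq (cost m), size fs = k -> (forall f, List.In f fs -> in_L f) ->
    @X_B m B (xt fs).

Definition panel_outcome (m n : nat) (Cost : 'I_n -> cost m)
    (xt : seq (cost m) -> alloc m) (S : {set 'I_n}) : alloc m :=
  xt [seq Cost i | i <- enum S].

Definition expected_panel_cost (m n k : nat) (Cost : 'I_n -> cost m)
    (xt : seq (cost m) -> alloc m) : R :=
  (\sum_(S : {set 'I_n} | #|S| == k) social_cost Cost (panel_outcome Cost xt S))
  / #|[set S : {set 'I_n} | #|S| == k]|%:R.

Definition panel_guarantee (m k : nat) (B eps : R) (xt : seq (cost m) -> alloc m) : Prop :=
  forall (n : nat) (Cost : 'I_n -> cost m), (k <= n)%N ->
    (forall i, monotone_cost (Cost i) /\ in_L (Cost i)) ->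
    expected_panel_cost k Cost xt <= social_opt B Cost + eps.

(* Group the projects into d = m/2 pairs; an agent of type (r, s) has cost 1 - x_j
   for the member j = s of pair r. A sign vector th picks a favoured member in every
   pair, and types are drawn independently with probability (1/2 +- dl)/d, "+" for
   the favoured members. With budget d the optimum funds all favoured members, and
   any allocation x has expected regret at least
   dl/d * sum_r (1 -+ (x_(r,1) - x_(r,0))): it must guess the sign of every pair.
   The laws of a panel of k independent agents under th and under th with one sign
   flipped have chi-square divergence at most (1 + 32 dl^2/d)^k - 1 <= 1/4 when
   256 k dl^2 <= d, so on average over th the panel decision errs on a constant
   fraction of the pairs and its expected regret is at least 3 dl/4.
   Averaging the guarantee over instances of n independent agents, every agent
   outside the panel sees exactly this expected regret, whence
   (n - k) 3 dl/4 - k <= n eps. With dl = 2 eps and n large this forces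
   1024 k eps^2 > d >= m/3. *)

From mathcomp Require Import all_boot all_order all_algebra.
From mathcomp Require Import all_classical all_reals.
From mathcomp Require Import Rstruct.
From mathcomp Require Import zify ring lra.
Set Implicit Arguments. Unset Strict Implicit. Unset Printing Implicit Defensive.
Import Order.TTheory GRing.Theory Num.Theory.
Local Open Scope ring_scope.

Lemma sum_indicator (I : finType) (j : I) (F : I -> R) :
  \sum_i (j == i)%:R * F i = F j.
Proof.
rewrite (bigD1 j) //= eqxx mul1r big1 ?addr0 // => i /negbTE.
by rewrite eq_sym => ->; rewrite mul0r.
Qed.

Lemma big_codom (V : Type) (idx : V) (op : Monoid.com_law idx) (I J : finType)
    (f : I -> J) (F : J -> V) :
  injective f -> \big[op/idx]_(j in codom f) F j = \big[op/idx]_i F (f i).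
Proof.
by move=> f_inj; rewrite -big_uniq ?(map_inj_uniq f_inj) ?enum_uniq // big_image.
Qed.

Section ProductMeasure.
Variables (T : finType) (D : T -> R).

Lemma sum_prod_box (I : finType) (c : I -> pred T) :
  \sum_(w : {ffun I -> T}) (\prod_a D (w a)) * [forall a, c a (w a)]%:R =
  \prod_a \sum_(x | c a x) D x.
Proof.
under [RHS]eq_bigr do rewrite big_mkcond /=.
rewrite bigA_distr_bigA /=; apply: eq_bigr => w _.
case: (boolP [forall a, c a (w a)]) => [/forallP cw | /forallPn [a cNwa]].
  by rewrite mulr1; apply: eq_bigr => a _; rewrite cw.
by rewrite mulr0 (bigD1 a) //= (negbTE cNwa) mul0r.
Qed.

Hypothesis D_sum1 : \sum_t D t = 1.

Lemma sum_prod_measure1 (I : finType) : \sum_(w : {ffun I -> T}) \prod_a D (w a) = 1.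
Proof. by rewrite -(bigA_distr_bigA (fun _ => D)) big1. Qed.

Section Marginal.
Variables (I J : finType) (f : J -> I) (i : I).
Hypotheses (f_inj : injective f) (i_notin : i \notin codom f).

Definition cylinder (v : {ffun J -> T}) (t : T) (a : I) : pred T :=
  if a == i then pred1 t else [pred x | [forall j, (f j == a) ==> (x == v j)]].

Lemma cylinderP (w : {ffun I -> T}) v t :
  (([ffun j => w (f j)] == v) && (w i == t)) = [forall a, cylinder v t a (w a)].
Proof.
apply/andP/forallP => [[/eqP <- /eqP <-] a | wv].
  rewrite /cylinder; case: (a =P i) => [-> | _] /=; first exact: eqxx.
  by apply/forallP => j; apply/implyP => /eqP <-; rewrite ffunE.
split; last by have := wv i; rewrite /cylinder eqxx.
apply/eqP/ffunP => j; rewrite ffunE; have := wv (f j); rewrite /cylinder.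
case: eqP => [fj_i | _]; first by case/negP: i_notin; rewrite -fj_i codom_f.
by move/forallP/(_ j); rewrite eqxx => /eqP.
Qed.

Lemma cylinder_mass v t :
  \prod_a \sum_(x | cylinder v t a x) D x = D t * \prod_j D (v j).
Proof.
rewrite (bigD1 i) //= {1}/cylinder eqxx big_pred1_eq; congr (_ * _).
rewrite (bigID (mem (codom f))) -[RHS]mulr1; congr (_ * _); last first.
  apply: big1 => a /andP [a_ni a_nf]; rewrite /cylinder (negbTE a_ni) -D_sum1.
  apply: eq_bigl => x /=; apply/forallP => j; apply/implyP => /eqP fj_a.
  by case/negP: a_nf; rewrite -fj_a; apply: codom_f.
rewrite (eq_bigl (mem (codom f))) => [|a]; last first.
  by apply/andP/idP => [[] // | a_f]; split=> //; apply: contraNneq i_notin => <-.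
rewrite big_codom //; apply: eq_bigr => j _; rewrite /cylinder.
case: eqP => [fj_i | _]; first by case/negP: i_notin; rewrite -fj_i codom_f.
rewrite (big_pred1 (v j)) // => x /=.
apply/forallP/idP => [/(_ j) | /eqP -> j']; first by rewrite eqxx.
by apply/implyP => /eqP /f_inj ->.
Qed.

Lemma sum_prod_marginal (F : {ffun J -> T} -> T -> R) :
  \sum_(w : {ffun I -> T}) (\prod_a D (w a)) * F [ffun j => w (f j)] (w i) =
  \sum_(v : {ffun J -> T}) (\prod_j D (v j)) * \sum_t D t * F v t.
Proof.
have expand (w : {ffun I -> T}) : F [ffun j => w (f j)] (w i) =
    \sum_(v : {ffun J -> T}) \sum_t [forall a, cylinder v t a (w a)]%:R * F v t.
  rewrite -(sum_indicator [ffun j => w (f j)] (F^~ (w i))).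
  apply: eq_bigr => v _; rewrite -(sum_indicator (w i) (F v)) mulr_sumr.
  by apply: eq_bigr => t _; rewrite mulrA -natrM mulnb cylinderP.
under eq_bigr do rewrite expand mulr_sumr.
rewrite exchange_big /=; apply: eq_bigr => v _.
under eq_bigr do rewrite mulr_sumr.
rewrite exchange_big mulr_sumr /=; apply: eq_bigr => t _.
under eq_bigr do rewrite mulrA.
by rewrite -mulr_suml sum_prod_box cylinder_mass mulrA [D t * _]mulrC.
Qed.

End Marginal.

End ProductMeasure.

Definition pref (d : nat) := ('I_d * bool)%type.

Lemma sum_pref d (F : pref d -> R) : \sum_t F t = \sum_r (F (r, true) + F (r, false)).
Proof.
rewrite (eq_bigr (fun t => F (t.1, t.2))) => [|[] //].
by rewrite -(pair_bigA _ (fun r s => F (r, s))); apply: eq_bigr => r _; rewrite big_bool.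
Qed.

Definition sgn (b : bool) : R := if b then 1 else -1.

Section PrefDistribution.
Variables (d : nat) (dl : R).
Hypotheses (d_gt0 : (0 < d)%N) (dl_gt0 : 0 < dl) (dl_le : dl <= 1/4).

Definition pref_prob (th : {ffun 'I_d -> bool}) (t : pref d) : R :=
  (1/2 + (if t.2 == th t.1 then dl else - dl)) / d%:R.

Lemma pref_prob_ge th t : 1 / (4 * d%:R) <= pref_prob th t.
Proof.
have d_pos : 0 < d%:R :> R by rewrite ltr0n.
rewrite /pref_prob invfM mulrA ler_pM2r ?invr_gt0 //.
have := dl_gt0; have := dl_le; case: ifP => _; lra.
Qed.

Lemma pref_prob_gt0 th t : 0 < pref_prob th t.
Proof.
apply: lt_le_trans (pref_prob_ge th t).
by rewrite divr_gt0 // mulr_gt0 // ltr0n.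
Qed.

Lemma pref_prob_sum1 th : \sum_t pref_prob th t = 1.
Proof.
have d_neq0 : d%:R != 0 :> R by rewrite pnatr_eq0 -lt0n.
rewrite sum_pref (eq_bigr (fun _ => d%:R^-1)) => [|r _]; last first.
  by rewrite /pref_prob /=; case: (th r) => /=; field.
by rewrite sumr_const card_ord -[_ *+ d]mulr_natr mulVf.
Qed.

End PrefDistribution.

Section Projects.
Variables (m d : nat).
Hypothesis d2_le_m : (d + d <= m)%N.

Lemma proj_subproof (t : pref d) : (t.1 + t.2 * d < m)%N.
Proof. by have := ltn_ord t.1; case: t.2; lia. Qed.

Definition proj (t : pref d) : 'I_m := Ordinal (proj_subproof t).

Lemma proj_inj : injective proj.
Proof.
move=> [r s] [r' s'] /(congr1 val) /=; have := ltn_ord r; have := ltn_ord r'.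
by case: s; case: s' => /= *; try lia; congr pair; apply: val_inj => /=; lia.
Qed.

Lemma sum_proj_le (x : alloc m) : in_cube x -> \sum_t x (proj t) <= \sum_j x j.
Proof.
move=> x_cube; rewrite -big_codom; last exact: proj_inj.
rewrite [leRHS](bigID (mem (codom proj))) /= lerDl.
by apply: sumr_ge0 => j _; case/andP: (x_cube j).
Qed.

Definition opt_alloc (th : {ffun 'I_d -> bool}) : alloc m := fun j =>
  [exists t, (proj t == j) && (t.2 == th t.1)]%:R.

Lemma opt_alloc_proj th t : opt_alloc th (proj t) = (t.2 == th t.1)%:R.
Proof.
rewrite /opt_alloc; case: existsP => [[t' /andP [/eqP /proj_inj -> ->]] // | no_t].
by case: eqP => // t_th; case: no_t; exists t; rewrite eqxx t_th eqxx.
Qed.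

Lemma opt_alloc_XB th : X_B d%:R (opt_alloc th).
Proof.
split=> [j | ]; first by rewrite /opt_alloc ler0n lern1 leq_b1.
rewrite (bigID (mem (codom proj))) /= [X in _ + X]big1 ?addr0 => [|j j_nproj]; last first.
  rewrite /opt_alloc; case: existsP => // [[t /andP [/eqP j_t _]]].
  by case/negP: j_nproj; rewrite -j_t; apply: codom_f.
rewrite big_codom; last exact: proj_inj.
under eq_bigr do rewrite opt_alloc_proj.
rewrite sum_pref (eq_bigr (fun _ => 1)) => [|r _]; last first.
  by case: (th r); rewrite /= ?addr0 ?add0r.
by rewrite sumr_const card_ord.
Qed.

Definition want (t : pref d) : cost m := fun x => 1 - x (proj t).

Lemma want_monotone_L t : monotone_cost (want t) /\ in_L (want t).
Proof.
split; first by move=> x y _ _ le_xy; rewrite /want lerD2l lerN2.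
split=> [x x_cube | x y _ _]; first by case/andP: (x_cube (proj t)); rewrite /want; lra.
have -> : want t x - want t y = y (proj t) - x (proj t) by rewrite /want; ring.
by rewrite distrC /dist1 (bigD1 (proj t)) //= lerDl sumr_ge0.
Qed.

Definition regret (th : {ffun 'I_d -> bool}) (t : pref d) (x : alloc m) :=
  opt_alloc th (proj t) - x (proj t).

Lemma regret_ge th t (x : alloc m) : in_cube x -> -1 <= regret th t x.
Proof.
move/(_ (proj t))/andP => [_ x_le1].
by rewrite /regret opt_alloc_proj; case: eqP => _ /=; lra.
Qed.

Definition exp_regret (dl : R) (th : {ffun 'I_d -> bool}) (x : alloc m) :=
  \sum_t pref_prob dl th t * regret th t x.

Definition bias (r : 'I_d) (x : alloc m) := x (proj (r, true)) - x (proj (r, false)).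

Lemma exp_regret_ge (d_gt0 : (0 < d)%N) (dl : R) (th : {ffun 'I_d -> bool}) x :
  X_B d%:R x -> dl / d%:R * \sum_r (1 - sgn (th r) * bias r x) <= exp_regret dl th x.
Proof.
move=> [x_cube x_budget].
have d_neq0 : d%:R != 0 :> R by rewrite pnatr_eq0 -lt0n.
rewrite -subr_ge0 /exp_regret sum_pref mulr_sumr -sumrB.
rewrite (eq_bigr (fun r => (1 - (x (proj (r, true)) + x (proj (r, false))))
   / (2 * d%:R))) => [|r _]; last first.
  rewrite /regret !opt_alloc_proj /pref_prob /bias /sgn /=.
  by case: (th r) => /=; field.
rewrite -mulr_suml divr_ge0 ?mulr_ge0 ?ler0n //.
rewrite sumrB subr_ge0 sumr_const card_ord -(sum_pref (fun t => x (proj t))).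
exact: le_trans (sum_proj_le x_cube) x_budget.
Qed.

End Projects.

Lemma expr1D_le (x : R) (k : nat) : 0 <= x -> 2 * k%:R * x <= 1 ->
  (1 + x) ^+ k <= 1 + 2 * k%:R * x.
Proof.
move=> x_ge0; elim: k => [|k IHk] kx_le; first by rewrite expr0 mulr0 mul0r addr0.
have kx_le' : 2 * k%:R * x <= 1.
  by apply: le_trans kx_le; rewrite ler_wpM2r // ler_wpM2l // ler_nat.
rewrite exprS; apply: le_trans (ler_wpM2l _ (IHk kx_le')) _; first lra.
rewrite -natr1 in kx_le *.
have : 0 <= k%:R * x by rewrite mulr_ge0.
nra.
Qed.

Lemma two_point_ge (P Q w : R) : 0 < P -> -1 <= w <= 1 ->
  3 * Q - Q ^+ 2 / P - P / 4 <= P * (1 - w) + Q * (1 + w).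
Proof.
move=> P_gt0 /andP [w_ge w_le]; rewrite -subr_ge0.
have -> : P * (1 - w) + Q * (1 + w) - (3 * Q - Q ^+ 2 / P - P / 4) =
    ((P - Q - w * P / 2) ^+ 2 + P ^+ 2 * (1 - w ^+ 2) / 4) / P.
  by field; rewrite lt0r_neq0.
apply/divr_ge0/ltW/P_gt0/addr_ge0; first exact: sqr_ge0.
by rewrite divr_ge0 // mulr_ge0 ?sqr_ge0 //; nra.
Qed.

Section Assouad.
Variables (m d : nat).
Hypotheses (d2_le_m : (d + d <= m)%N) (d_gt0 : (0 < d)%N).
Variable dl : R.
Hypotheses (dl_gt0 : 0 < dl) (dl_le : dl <= 1/4).
Variables (k : nat) (X : {ffun 'I_k -> pref d} -> alloc m).
Hypothesis X_XB : forall u, X_B d%:R (X u).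
Hypothesis k_small : k%:R * dl ^+ 2 * 256 <= d%:R.

Local Notation D := (pref_prob dl).
Local Notation proj := (proj d2_le_m).

Definition panel_prob th (u : {ffun 'I_k -> pref d}) := \prod_p D th (u p).

Lemma panel_prob_gt0 th u : 0 < panel_prob th u.
Proof. by apply: prodr_gt0 => p _; apply: pref_prob_gt0. Qed.

Lemma panel_prob_sum1 th : \sum_u panel_prob th u = 1.
Proof. by apply: sum_prod_measure1; apply: pref_prob_sum1. Qed.

Definition flip (r : 'I_d) (th : {ffun 'I_d -> bool}) : {ffun 'I_d -> bool} :=
  [ffun r' => if r' == r then ~~ th r' else th r'].

Lemma flipK r : involutive (flip r).
Proof.
by move=> th; apply/ffunP => r'; rewrite !ffunE; case: (r' == r); rewrite ?negbK.
Qed.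

Lemma chi2_pref_flip th r :
  \sum_t D (flip r th) t ^+ 2 / D th t <= 1 + 32 * dl ^+ 2 / d%:R.
Proof.
have d_gt0R : 0 < d%:R :> R by rewrite ltr0n.
have D_gt0 := pref_prob_gt0 d_gt0 dl_gt0 dl_le th.
have sq_split t : D (flip r th) t ^+ 2 / D th t =
    (D (flip r th) t - D th t) ^+ 2 / D th t + 2 * D (flip r th) t - D th t.
  by field; rewrite lt0r_neq0.
under eq_bigr do rewrite sq_split.
rewrite sumrB big_split /= -mulr_sumr !pref_prob_sum1 // mulr1.
rewrite sum_pref (bigD1 r) //= big1 ?addr0 => [|r' r'_neq]; last first.
  by rewrite /pref_prob /= ffunE (negbTE r'_neq) !subrr expr0n /= !mul0r addr0.
have sq_le s : (D (flip r th) (r, s) - D th (r, s)) ^+ 2 / D th (r, s) <=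
    16 * dl ^+ 2 / d%:R.
  have sq_eq : (D (flip r th) (r, s) - D th (r, s)) ^+ 2 =
      16 * dl ^+ 2 / d%:R * (1 / (4 * d%:R)).
    rewrite /pref_prob ffunE eqxx /=.
    by case: (th r); case: s => /=; field; rewrite pnatr_eq0 -lt0n.
  rewrite ler_pdivrMr // sq_eq ler_wpM2l ?pref_prob_ge //.
  by apply: divr_ge0 => //; apply: mulr_ge0; [lra | exact: sqr_ge0].
have := sq_le true; have := sq_le false; lra.
Qed.

Lemma chi2_panel_prob th r :
  \sum_u panel_prob (flip r th) u ^+ 2 / panel_prob th u =
  (\sum_t D (flip r th) t ^+ 2 / D th t) ^+ k.
Proof.
under eq_bigr do rewrite /panel_prob -prodrXl -prodf_div.
by rewrite -(bigA_distr_bigA (fun _ t => D (flip r th) t ^+ 2 / D th t)) prodr_const card_ord.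
Qed.

Lemma chi2_panel_flip th r :
  \sum_u panel_prob (flip r th) u ^+ 2 / panel_prob th u <= 5/4.
Proof.
have d_gt0R : 0 < d%:R :> R by rewrite ltr0n.
rewrite chi2_panel_prob.
set c := 32 * dl ^+ 2 / d%:R.
have c_ge0 : 0 <= c by rewrite /c divr_ge0 ?mulr_ge0 ?sqr_ge0 ?ltW.
have kc_le : 2 * k%:R * c <= 1/4.
  have -> : 2 * k%:R * c = k%:R * dl ^+ 2 * 256 / d%:R / 4.
    by rewrite /c; field; rewrite lt0r_neq0.
  rewrite ler_pdivrMr ?ler_pdivrMr //.
  have := k_small; lra.
apply: (@le_trans _ _ ((1 + c) ^+ k)).
  apply: lerXn2r; rewrite ?nnegrE ?addr_ge0 //; last exact: chi2_pref_flip.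
  apply: sumr_ge0 => t _; rewrite divr_ge0 ?sqr_ge0 // ltW //.
  exact: pref_prob_gt0.
apply: le_trans (expr1D_le c_ge0 _) _; lra.
Qed.

Lemma bias_bound r (x : alloc m) : X_B d%:R x -> -1 <= bias d2_le_m r x <= 1.
Proof.
case=> x_cube _; rewrite /bias.
case/andP: (x_cube (proj (r, true))); case/andP: (x_cube (proj (r, false))).
by move=> *; apply/andP; split; lra.
Qed.

Definition sign_error r th :=
  \sum_u panel_prob th u * (1 - sgn (th r) * bias d2_le_m r (X u)).

Lemma sign_error_flip_ge r th : 3/2 <= sign_error r th + sign_error r (flip r th).
Proof.
have flip_r : flip r th r = ~~ th r by rewrite ffunE eqxx.
rewrite /sign_error -big_split /=.
apply: (@le_trans _ _ (\sum_u (3 * panel_prob (flip r th) u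
    - panel_prob (flip r th) u ^+ 2 / panel_prob th u - panel_prob th u / 4))).
  rewrite !sumrB -mulr_sumr -mulr_suml !panel_prob_sum1.
  by have := chi2_panel_flip th r; lra.
apply: ler_sum => u _; rewrite flip_r.
have w_bound : -1 <= sgn (th r) * bias d2_le_m r (X u) <= 1.
  case/andP: (bias_bound r (X_XB u)) => *.
  by rewrite /sgn; case: (th r); apply/andP; split; lra.
have := two_point_ge (panel_prob (flip r th) u) (panel_prob_gt0 th u) w_bound.
by rewrite /sgn; case: (th r) => /=; lra.
Qed.

Lemma sum_sign_error_ge r :
  3/4 * #|{ffun 'I_d -> bool}|%:R <= \sum_th sign_error r th.
Proof.
have flip_sum : \sum_th sign_error r th = \sum_th sign_error r (flip r th).
  exact: (reindex_inj (can_inj (flipK r))).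
have : \sum_(th : {ffun 'I_d -> bool}) 3/2 <=
    \sum_th (sign_error r th + sign_error r (flip r th)).
  by apply: ler_sum => th _; apply: sign_error_flip_ge.
rewrite sumr_const big_split /= -flip_sum -mulr_natr; lra.
Qed.

Definition panel_regret th := \sum_u panel_prob th u * exp_regret d2_le_m dl th (X u).

Lemma panel_regret_ge th : dl / d%:R * \sum_r sign_error r th <= panel_regret th.
Proof.
rewrite /panel_regret /sign_error exchange_big mulr_sumr /=.
apply: ler_sum => u _; rewrite -!mulr_sumr mulrCA.
rewrite ler_wpM2l ?(ltW (panel_prob_gt0 th u)) //.
exact: exp_regret_ge d2_le_m d_gt0 dl th _ (X_XB u).
Qed.

Lemma sum_panel_regret_ge :
  3 * dl / 4 * #|{ffun 'I_d -> bool}|%:R <= \sum_th panel_regret th.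
Proof.
have d_neq0 : d%:R != 0 :> R by rewrite pnatr_eq0 -lt0n.
apply: le_trans (ler_sum _ (fun th _ => panel_regret_ge th)).
rewrite -mulr_sumr exchange_big /=.
apply: le_trans (ler_wpM2l _ (ler_sum _ (fun r _ => sum_sign_error_ge r))).
  rewrite sumr_const card_ord -[(3 / 4 * _) *+ d]mulr_natr.
  by rewrite (_ : dl / d%:R * _ = 3 * dl / 4 * #|{ffun 'I_d -> bool}|%:R) ?lexx //; field.
by rewrite divr_ge0 ?ler0n ?ltW.
Qed.

Lemma panel_regret_large : exists th, 3 * dl / 4 <= panel_regret th.
Proof.
apply: contrapT => /forallNP small.
suff : \sum_th panel_regret th < \sum_(th : {ffun 'I_d -> bool}) 3 * dl / 4.
  by rewrite sumr_const -mulr_natr; have := sum_panel_regret_ge; lra.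
apply: ltr_sum => [|th _]; first by apply/hasP; exists [ffun=> true].
by rewrite ltNge; apply/negP/small.
Qed.

End Assouad.

Lemma codom_ffun_nth (I U : Type) (k : nat) (s : seq I) (x0 : I) (g : I -> U) :
  size s = k -> codom [ffun p : 'I_k => g (nth x0 s p)] = map g s.
Proof.
move=> <-; rewrite -[in RHS](mkseq_nth x0 s) -map_comp /mkseq -val_enum_ord -map_comp.
by apply: eq_map => p; rewrite /= ffunE.
Qed.

Lemma card_panels n k : #|(fun S : {set 'I_n} => #|S| == k)| = 'C(n, k).
Proof. by rewrite -[n in RHS]card_ord -card_draws cardsE. Qed.

Lemma card_panels_classic n k :
  #|mem [set S : {set 'I_n} | #|S| == k]%classic| = 'C(n, k).
Proof.
rewrite -card_panels; apply: eq_card => S.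
by apply/asboolP/idP.
Qed.

Lemma sum_if_mem n (S : {set 'I_n}) (a b : R) :
  \sum_i (if i \in S then a else b) = n%:R * b + #|S|%:R * (a - b).
Proof.
transitivity (\sum_i (b + (if i \in S then a - b else 0))).
  by apply: eq_bigr => i _; case: ifP => _; rewrite ?subrKC ?addr0.
by rewrite big_split /= -big_mkcond !sumr_const card_ord !mulr_natl.
Qed.

Lemma expected_panel_cost_sub (m n k : nat) (Cost : 'I_n -> cost m)
    (xt : seq (cost m) -> alloc m) (x : alloc m) : (k <= n)%N ->
  expected_panel_cost k Cost xt - social_cost Cost x =
  (\sum_(S : {set 'I_n} | #|S| == k)
     (social_cost Cost (panel_outcome Cost xt S) - social_cost Cost x)) / 'C(n, k)%:R.
Proof.
move=> k_le_n; have C_neq0 : 'C(n, k)%:R != 0 :> R by rewrite pnatr_eq0 -lt0n bin_gt0.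
rewrite sumrB sumr_const card_panels -[_ *+ 'C(n, k)]mulr_natr mulrBl mulfK //.
by rewrite /expected_panel_cost card_panels_classic.
Qed.

Section PanelAveraging.
Variables (m d : nat).
Hypotheses (d2_le_m : (d + d <= m)%N) (d_gt0 : (0 < d)%N).
Variable dl : R.
Hypotheses (dl_gt0 : 0 < dl) (dl_le : dl <= 1/4).
Variables (k n : nat) (eps : R) (xt : seq (cost m) -> alloc m).
Hypotheses (k_le_n : (k <= n)%N) (n_gt0 : (0 < n)%N)
  (xt_valid : panel_function_valid k d%:R xt).
Hypothesis xt_guarantee : panel_guarantee k d%:R eps xt.

Local Notation want := (want d2_le_m).
Local Notation regret := (regret d2_le_m).
Local Notation D := (pref_prob dl).

Definition panel_alloc (u : {ffun 'I_k -> pref d}) := xt (map want (codom u)).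

Lemma xt_want_XB (s : seq (pref d)) : size s = k -> X_B d%:R (xt (map want s)).
Proof.
move=> s_k; apply: xt_valid; first by rewrite size_map.
by move=> f /List.in_map_iff [t [<- _]]; case: (want_monotone_L d2_le_m t).
Qed.

Lemma panel_alloc_XB u : X_B d%:R (panel_alloc u).
Proof. by apply: xt_want_XB; rewrite size_codom card_ord. Qed.

Lemma social_cost_sub_opt th (w : {ffun 'I_n -> pref d}) (x : alloc m) :
  social_cost (want \o w) x - social_cost (want \o w) (opt_alloc d2_le_m th) =
  (\sum_i regret th (w i) x) / n%:R.
Proof.
rewrite /social_cost -mulrBl -sumrB; congr (_ / _).
by apply: eq_bigr => i _; rewrite /regret /want /=; ring.
Qed.

Lemma instance_regret_le th (w : {ffun 'I_n -> pref d}) :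
  \sum_(S : {set 'I_n} | #|S| == k) \sum_i regret th (w i) (panel_outcome (want \o w) xt S)
    <= n%:R * eps * 'C(n, k)%:R.
Proof.
have C_gt0 : 0 < 'C(n, k)%:R :> R by rewrite ltr0n bin_gt0.
have n_gt0R : 0 < n%:R :> R by rewrite ltr0n.
set Cost := want \o w; set opt := opt_alloc d2_le_m th.
have opt_le : social_opt d%:R Cost <= social_cost Cost opt.
  apply: ge_inf; last by exists opt => //; apply: opt_alloc_XB.
  exists 0 => _ [x [x_cube _] <-]; rewrite /social_cost divr_ge0 // sumr_ge0 // => i _.
  by case/andP: (x_cube (proj d2_le_m (w i))); rewrite /Cost /= /want subr_ge0.
have gap : expected_panel_cost k Cost xt - social_cost Cost opt <= eps.
  by have := xt_guarantee k_le_n (fun i => want_monotone_L d2_le_m (w i)); lra.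
rewrite expected_panel_cost_sub // (eq_bigr _ (fun S _ => social_cost_sub_opt th w _)) in gap.
rewrite -mulr_suml -mulrA -invfM in gap.
by rewrite mulrAC [_ * eps]mulrC -ler_pdivrMr ?mulr_gt0.
Qed.

Lemma outside_panel_regret th (S : {set 'I_n}) i : #|S| = k -> i \notin S ->
  \sum_(w : {ffun 'I_n -> pref d}) (\prod_a D th (w a)) *
     regret th (w i) (panel_outcome (want \o w) xt S) =
  panel_regret d2_le_m dl panel_alloc th.
Proof.
move=> S_k i_nS; set e := enum S.
have e_size : size e = k by rewrite -cardE.
have i_ne : i \notin e by rewrite mem_enum.
have f_inj : injective (fun p : 'I_k => nth i e p).
  by move=> p q /eqP; rewrite nth_uniq ?e_size ?enum_uniq // => /eqP /val_inj.
have i_ncodom : i \notin codom (fun p : 'I_k => nth i e p).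
  by apply/codomP => -[p i_p]; case/negP: i_ne; rewrite i_p mem_nth ?e_size.
have := sum_prod_marginal (pref_prob_sum1 dl d_gt0 th) f_inj i_ncodom
  (fun v t => regret th t (panel_alloc v)).
rewrite /panel_regret /panel_prob /exp_regret /panel_alloc => <-.
apply: eq_bigr => w _.
by rewrite (codom_ffun_nth _ w e_size) -map_comp.
Qed.

Lemma panel_regret_sum_ge th (S : {set 'I_n}) : #|S| = k ->
  (n - k)%:R * panel_regret d2_le_m dl panel_alloc th - k%:R <=
  \sum_i \sum_(w : {ffun 'I_n -> pref d})
    (\prod_a D th (w a)) * regret th (w i) (panel_outcome (want \o w) xt S).
Proof.
move=> S_k; set V := panel_regret _ _ _ th.
have -> : (n - k)%:R * V - k%:R = \sum_i (if i \in S then -1 else V).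
  by rewrite sum_if_mem S_k natrB //; ring.
apply: ler_sum => i _; case: ifP => [i_S | /negbT i_nS]; last first.
  by rewrite outside_panel_regret.
rewrite -[-1]mul1r -{1}(sum_prod_measure1 (pref_prob_sum1 dl d_gt0 th) 'I_n) mulr_suml.
apply: ler_sum => w _; apply: ler_wpM2l.
  by apply: prodr_ge0 => a _; apply/ltW/pref_prob_gt0.
have [x_cube _] : X_B d%:R (panel_outcome (want \o w) xt S).
  by rewrite /panel_outcome (map_comp want w); apply: xt_want_XB; rewrite size_map -cardE.
exact: regret_ge.
Qed.

Lemma panel_regret_le th :
  (n - k)%:R * panel_regret d2_le_m dl panel_alloc th - k%:R <= n%:R * eps.
Proof.
pose W (w : {ffun 'I_n -> pref d}) := \prod_a D th (w a).
have C_gt0 : 0 < 'C(n, k)%:R :> R by rewrite ltr0n bin_gt0.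
have : \sum_w W w * \sum_(S : {set 'I_n} | #|S| == k)
    \sum_i regret th (w i) (panel_outcome (want \o w) xt S) <= n%:R * eps * 'C(n, k)%:R.
  apply: le_trans (_ : _ <= \sum_w W w * (n%:R * eps * 'C(n, k)%:R)) _.
    apply: ler_sum => w _; rewrite ler_wpM2l ?instance_regret_le //.
    by apply: prodr_ge0 => a _; apply/ltW/pref_prob_gt0.
  by rewrite -mulr_suml sum_prod_measure1 ?mul1r // pref_prob_sum1.
under eq_bigr do rewrite mulr_sumr; rewrite exchange_big /=.
under eq_bigr do (under eq_bigr do rewrite mulr_sumr; rewrite exchange_big /=).
move/(le_trans (ler_sum _ (fun S S_k => panel_regret_sum_ge th (eqP S_k)))).
by rewrite sumr_const card_panels -[_ *+ 'C(n, k)]mulr_natr ler_pM2r.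
Qed.

End PanelAveraging.

Lemma exists_population (c eps : R) (k : nat) : 0 <= c -> 0 < eps -> (0 < k)%N ->
  exists n, (k <= n)%N /\ c * k%:R < n%:R * eps.
Proof.
move=> c_ge0 eps_gt0 k_gt0; pose N := Num.Def.archi_bound (c / eps).
have N_eps : c < N%:R * eps.
  by rewrite -ltr_pdivrMr //; apply/archi_boundP/divr_ge0/ltW.
have N_gt0 : (0 < N)%N.
  by rewrite lt0n; apply/eqP => N0; move: N_eps; rewrite N0 mul0r; lra.
exists (k * N)%N; split; first by rewrite leq_pmulr.
by rewrite natrM -mulrA mulrC ltr_pM2l // ltr0n.
Qed.

Lemma panel_size_gt (m d k : nat) (eps : R) (xt : seq (cost m) -> alloc m) :
  (d + d <= m)%N -> (0 < d)%N -> 0 < eps -> eps <= 1/8 -> (1 <= k)%N ->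
  panel_function_valid k d%:R xt -> panel_guarantee k d%:R eps xt ->
  d%:R < 1024 * k%:R * eps ^+ 2.
Proof.
move=> d2_le_m d_gt0 eps_gt0 eps_le k_gt0 xt_valid xt_guarantee.
rewrite ltNge; apply/negP => k_small.
have dl_gt0 : 0 < 2 * eps by lra.
have dl_le : 2 * eps <= 1/4 by lra.
have k_small_dl : k%:R * (2 * eps) ^+ 2 * 256 <= d%:R.
  by rewrite (_ : _ * 256 = 1024 * k%:R * eps ^+ 2) //; ring.
have [th V_large] := panel_regret_large d2_le_m d_gt0 dl_gt0 dl_le
  (panel_alloc_XB d2_le_m xt_valid) k_small_dl.
have [n [k_le_n n_eps]] := exists_population (ler0n R 4) eps_gt0 k_gt0.
have := panel_regret_le d2_le_m d_gt0 dl_gt0 dl_le k_le_n (leq_trans k_gt0 k_le_n)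
  xt_valid xt_guarantee th.
have := ler_wpM2l (ler0n R (n - k)) V_large.
rewrite natrB //; set V := panel_regret _ _ _ th.
have : k%:R * eps <= k%:R * (1 / 8) by rewrite ler_wpM2l.
have := ler0n R k; lra.
Qed.

Theorem theorem3p3 :
  exists c : R, 0 < c /\
  forall (m : nat) (eps : R) (k : nat),
    (2 <= m)%N -> 0 < eps -> eps < 1 / 64 -> (1 <= k)%N ->
    forall xt : seq (cost m) -> alloc m,
      panel_function_valid k (m./2)%:R xt ->
      panel_guarantee k (m./2)%:R eps xt ->
      c * m%:R / eps ^+ 2 <= k%:R.
Proof.
exists (1 / 3072); split => [|m eps k m_ge2 eps_gt0 eps_lt k_ge1 xt xt_valid xt_guarantee].
  lra.
have d2_le_m : (m./2 + m./2 <= m)%N by lia.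
have d_gt0 : (0 < m./2)%N by lia.
have m_le : m%:R <= 3 * (m./2)%:R :> R by rewrite -natrM ler_nat; lia.
have eps_le : eps <= 1/8 by lra.
have := panel_size_gt d2_le_m d_gt0 eps_gt0 eps_le k_ge1 xt_valid xt_guarantee.
rewrite ler_pdivrMr ?exprn_gt0 //.
lra.
Qed.
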